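(* Let $G$ be a connected graph. Then $\mathcal{Z}^{\mathrm{TE}}_+(G)=\mathcal{Z}^{\mathrm{TS}}_+(G)$ if and only if $G\cong K_n$ for some $n$.
   Context: PSD forcing: vertices are colored blue or white; if $B$ is the current set of blue vertices, $C$ a connected component of $G-B$, and $u$ a blue vertex with $N_G(u)\cap V(C)=\{v\}$, then $u$ may force $v$ to become blue. A PSD forcing set is a set of initially blue vertices from which repeated application of this rule turns every vertex blue; $\mathrm{Z}_+(G)$ is the minimum size of a PSD forcing set. $\mathcal{Z}^{\mathrm{TE}}_+(G)$ has as vertices the minimum PSD forcing sets of $G$, with $S_1S_2$ an edge iff $S_1\setminus S_2=\{v_1\}$ and $S_2\setminus S_1=\{v_2\}$ for some vertices $v_1,v_2$; $\mathcal{Z}^{\mathrm{TS}}_+(G)$ has the same vertex set with the additional adjacency requirement $v_1v_2\in E(G)$. *)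

From mathcomp Require Import all_boot all_order.
Set Implicit Arguments. Unset Strict Implicit. Unset Printing Implicit Defensive.

Section PSD.
Variables (T : finType) (e : rel T).

Definition simple_graph : Prop := symmetric e /\ irreflexive e.

Definition connected_graph : Prop := forall x y : T, connect e x y.

Definition del_rel (B : {set T}) : rel T :=
  fun x y => [&& e x y, x \notin B & y \notin B].

Definition comp_of (B : {set T}) (v : T) : {set T} :=
  [set w | (w \notin B) && connect (del_rel B) v w].

(* one PSD forcing step: u blue, v white, N(u) ∩ C_v = {v}; v turns blue *)
Definition psd_force (B : {set T}) (u v : T) : bool :=
  [&& u \in B, v \notin B & [set w in comp_of B v | e u w] == [set v]].

Definition psd_step : rel {set T} :=
  fun B B' => [exists u, exists v, psd_force B u v && (B' == v |: B)].

Definition psd_forcing_set (S : {set T}) : bool := connect psd_step S setT.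

(* Z_+(G): minimum size of a PSD forcing set (setT is always one) *)
Definition Zplus : nat :=
  \big[minn/#|T|]_(S : {set T} | psd_forcing_set S) #|S|.

Definition min_psd_forcing_set (S : {set T}) : bool :=
  psd_forcing_set S && (#|S| == Zplus).

Definition ZTE_adj (S1 S2 : {set T}) : bool :=
  [&& min_psd_forcing_set S1, min_psd_forcing_set S2 &
    [exists v1, exists v2, (S1 :\: S2 == [set v1]) && (S2 :\: S1 == [set v2])]].

Definition ZTS_adj (S1 S2 : {set T}) : bool :=
  [&& min_psd_forcing_set S1, min_psd_forcing_set S2 &
    [exists v1, exists v2, [&& S1 :\: S2 == [set v1], S2 :\: S1 == [set v2]
                             & e v1 v2]]].

End PSD.

Definition complete_rel (n : nat) : rel 'I_n := fun x y => x != y.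
Arguments complete_rel n : clear implicits.

Definition graph_iso (T1 T2 : finType) (e1 : rel T1) (e2 : rel T2) : Prop :=
  exists f : T1 -> T2, bijective f /\ forall x y, e2 (f x) (f y) = e1 x y.

From mathcomp Require Import all_boot all_order.
Set Implicit Arguments. Unset Strict Implicit. Unset Printing Implicit Defensive.
Import Order.TTheory.

(* If G is complete, any two distinct vertices are adjacent, so every token
   exchange is a token slide.  Conversely, if a blue vertex u of a minimum PSD
   forcing set S can force two distinct vertices p and q, then S - u + p and
   S - u + q are minimum PSD forcing sets (the new vertex forces u back) that
   differ by the nonadjacent pair p, q: a TE edge that is not a TS edge.
   So assume no blue vertex of a minimum PSD forcing set has two targets.
   Swapping along a first force into a white component then never destroys an
   isolated white vertex, and either creates a new one or leaves a smaller
   nontrivial white component; an extremal choice yields a minimum PSD forcing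
   set S whose white vertices are all isolated.  A white vertex w and any
   neighbour x of w are then closed twins (otherwise S - x would be a smaller
   PSD forcing set), and by connectivity G is complete. *)

Lemma connect_stable (T : finType) (r : rel T) (A : pred T) x y :
  (forall a b, A a -> r a b -> A b) -> A x -> connect r x y -> A y.
Proof.
move=> rA Ax /connectP[p + ->]; elim: p x Ax => //= z p IH x Ax /andP[rxz].
exact: IH (rA _ _ Ax rxz).
Qed.

Lemma setD_swap (T : finType) (S : {set T}) u a b :
  a \notin S -> a != b -> (a |: S :\ u) :\: (b |: S :\ u) = [set a].
Proof.
move=> aS ab; apply/setP => x; rewrite !inE.
case: (x =P a) => [->|_] /=; first by rewrite (negbTE ab) (negbTE aS) !andbF.
by case: (x != u); case: (x \in S); rewrite ?orbT ?andbF.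
Qed.

Section PSDForcing.
Variables (T : finType) (e : rel T).
Implicit Types (S B : {set T}) (a b c u v w x y z : T).

Lemma in_comp_of B v w :
  (w \in comp_of e B v) = (w \notin B) && connect (del_rel e B) v w.
Proof. by rewrite inE. Qed.

Lemma comp_of_id B v : v \notin B -> v \in comp_of e B v.
Proof. by move=> vB; rewrite in_comp_of vB connect0. Qed.

Lemma comp_of_notin B v w : w \in comp_of e B v -> w \notin B.
Proof. by rewrite in_comp_of => /andP[]. Qed.

Lemma comp_of_adj B v w z :
  w \in comp_of e B v -> e w z -> z \notin B -> z \in comp_of e B v.
Proof.
rewrite !in_comp_of => /andP[wB vw] ewz zB; rewrite zB.
by apply: connect_trans vw (connect1 _); rewrite /del_rel ewz wB zB.
Qed.

Lemma comp_of_min B v (A : {set T}) :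
  v \in A -> (forall a b, a \in A -> e a b -> b \notin B -> b \in A) ->
  comp_of e B v \subset A.
Proof.
move=> vA Acl; apply/subsetP => w; rewrite in_comp_of => /andP[_].
apply: (connect_stable (A := fun t => t \in A)) vA => a b aA /and3P[eab _ bB].
exact: (Acl a b aA eab bB).
Qed.

Lemma comp_ofS S B v : S \subset B -> comp_of e B v \subset comp_of e S v.
Proof.
move=> sSB; have nB t : t \notin B -> t \notin S by apply/contra/subsetP.
apply/subsetP => w; rewrite !in_comp_of => /andP[/nB -> /=].
apply: connect_sub => a b /and3P[eab aB bB].
by apply: connect1; rewrite /del_rel eab !nB.
Qed.

Lemma psd_forceP B u v :
  reflect [/\ u \in B, v \notin B, e u v
             & {in comp_of e B v, forall w, e u w -> w = v}]
          (psd_force e B u v).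
Proof.
apply: (iffP and3P) => [[uB vB /eqP E]|[uB vB euv uniq]].
  have vE w : (w \in comp_of e B v) && e u w = (w == v).
    by move/setP: E => /(_ w); rewrite !inE -in_comp_of.
  split=> // [|w wC euw]; first by have := vE v; rewrite eqxx => /andP[].
  by apply/eqP; rewrite -vE wC.
split=> //; apply/eqP/setP => w; rewrite !inE -in_comp_of.
apply/andP/eqP => [[wC euw]|->]; first exact: uniq wC euw.
by rewrite comp_of_id.
Qed.

Lemma psd_force_step B u v : psd_force e B u v -> psd_step e B (v |: B).
Proof.
by move=> f; apply/existsP; exists u; apply/existsP; exists v; rewrite f eqxx.
Qed.

Lemma psd_forcing_set_force B u v :
  psd_force e B u v -> psd_forcing_set e (v |: B) -> psd_forcing_set e B.
Proof. by move=> f; apply: connect_trans (connect1 (psd_force_step f)). Qed.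

Lemma psd_force_sub S B u v :
  S \subset B -> psd_force e S u v -> v \notin B -> psd_force e B u v.
Proof.
move=> sSB /psd_forceP[uS _ euv uniq] vB; apply/psd_forceP; split=> //.
  exact: (subsetP sSB).
by move=> w /(subsetP (comp_ofS v sSB)); apply: uniq.
Qed.

Lemma psd_forcing_setS S B :
  S \subset B -> psd_forcing_set e S -> psd_forcing_set e B.
Proof.
move=> + /connectP[p]; elim: p S B => [|S' p IH] S B sSB /=.
  by move=> _ ST; move: sSB; rewrite -ST subTset => /eqP->; apply: connect0.
case/andP=> /existsP[u /existsP[v /andP[f /eqP->]]] pS' lS'.
have [vB|vB] := boolP (v \in B).
  by apply: IH pS' lS'; rewrite subUset sub1set vB.
apply: psd_forcing_set_force (psd_force_sub sSB f vB) _.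
by apply: IH pS' lS'; rewrite setUS.
Qed.

Lemma exists_psd_force B :
  psd_forcing_set e B -> B != setT -> exists u v, psd_force e B u v.
Proof.
case/connectP=> -[|B' p] /= + lB nBT; first by rewrite lB eqxx in nBT.
by case/andP=> /existsP[u /existsP[v /andP[f _]]] _; exists u, v.
Qed.

Lemma Zplus_le S : psd_forcing_set e S -> Zplus e <= #|S|.
Proof. by move=> fS; rewrite /Zplus -minEnat; exact: (bigmin_le_cond #|T| _ fS). Qed.

Lemma exists_min_psd_forcing_set : exists S, min_psd_forcing_set e S.
Proof.
have fT : psd_forcing_set e setT by apply: connect0.
have [S fS eS] := eq_bigmin (x := #|T|) [set: T] (psd_forcing_set e)
  (fun S => #|S|) fT (fun S _ => max_card S).
by exists S; apply/andP; split; [exact: fS | rewrite /Zplus -minEnat eS].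
Qed.

Definition isolated_white S : {set T} :=
  [set w | (w \notin S) && [forall y, e w y ==> (y \in S)]].

Lemma isolated_whiteP S w :
  reflect (w \notin S /\ forall y, e w y -> y \in S) (w \in isolated_white S).
Proof.
rewrite inE; apply: (iffP andP) => -[wS nbS]; split=> //.
  by move=> y; apply/implyP/(forallP nbS).
by apply/forallP => y; apply/implyP/nbS.
Qed.

Lemma comp_of_isolated S w :
  w \in isolated_white S -> comp_of e S w = [set w].
Proof.
case/isolated_whiteP=> wS nbS; apply/eqP; rewrite eqEsubset sub1set comp_of_id //.
rewrite andbT; apply: comp_of_min; first exact: set11.
by move=> a b /set1P-> /nbS ->.
Qed.

Lemma psd_force_isolated S x w :
  x \in S -> e x w -> w \in isolated_white S -> psd_force e S x w.
Proof.
move=> xS exw wI; have [wS _] := isolated_whiteP _ _ wI.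
by apply/psd_forceP; split=> // z; rewrite comp_of_isolated // => /set1P.
Qed.

Definition psd_force_functional : Prop :=
  forall S u p q, min_psd_forcing_set e S ->
    psd_force e S u p -> psd_force e S u q -> p = q.

Hypothesis e_sym : symmetric e.

Lemma comp_of_eq B c v :
  v \in comp_of e B c -> comp_of e B v = comp_of e B c.
Proof.
have dsym : symmetric (del_rel e B).
  by move=> a b; rewrite /del_rel e_sym [(a \notin B) && _]andbC.
rewrite in_comp_of => /andP[_ cv]; apply/setP => w; rewrite !in_comp_of.
case: (w \in B) => //=; apply/idP/idP; first exact: connect_trans.
by apply: connect_trans; rewrite (sym_connect_sym dsym).
Qed.

Lemma psd_force_into_comp S c : psd_forcing_set e S -> c \notin S ->
  exists u v, psd_force e S u v /\ v \in comp_of e S c.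
Proof.
(* Blue-ing everything outside C still gives a PSD forcing set; its first
   force goes into C and is already available from S. *)
move=> fS cS; set C := comp_of e S c.
have sSC : S \subset ~: C by apply/subsetP => s sS; rewrite inE in_comp_of sS.
have [|u [v /psd_forceP[uC vC euv uniq]]] := exists_psd_force (psd_forcing_setS sSC fS).
  by apply/negP => /eqP CT; move: (in_setT c); rewrite -CT inE comp_of_id.
rewrite inE negbK in vC; exists u, v; split=> //.
have CE : comp_of e S v = C := comp_of_eq vC.
have CvC : comp_of e S v \subset comp_of e (~: C) v.
  apply: comp_of_min; first by rewrite comp_of_id // inE negbK.
  move=> a b aC eab bS; apply: (comp_of_adj aC eab).
  rewrite inE negbK -CE; apply: comp_of_adj _ eab bS.
  exact: (subsetP (comp_ofS v sSC)).
apply/psd_forceP; split=> //; last by move=> w /(subsetP CvC); apply: uniq.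
- apply: contraLR uC => uS; rewrite inE negbK.
  by apply: comp_of_adj vC _ uS; rewrite e_sym.
- by apply: comp_of_notin vC.
Qed.

Lemma comp_of_swap S u v y :
  psd_force e S u v -> y \in comp_of e S v -> y != v ->
  comp_of e (v |: S :\ u) y \subset comp_of e S v :\ v.
Proof.
case/psd_forceP=> _ _ _ uniq yC yv; apply: comp_of_min; first by rewrite in_setD1 yv.
move=> a b /setD1P[av aC] eab.
rewrite in_setU1 in_setD1 negb_or negb_and negbK => /andP[bv /orP[/eqP bu|bS]].
  by move: eab; rewrite bu e_sym => /(uniq _ aC) /eqP; rewrite (negbTE av).
by rewrite in_setD1 bv (comp_of_adj aC eab bS).
Qed.

Lemma min_psd_forcing_set_swap S u v :
  min_psd_forcing_set e S -> psd_force e S u v ->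
  min_psd_forcing_set e (v |: S :\ u).
Proof.
case/andP=> fS /eqP cS f; have /psd_forceP[uS vS euv _] := f.
set S' := v |: S :\ u.
have uS' : u \notin S'.
  by rewrite !inE eqxx /= orbF; apply: contraNneq vS => <-.
have f' : psd_force e S' v u.
  apply/psd_forceP; split=> //; [exact: setU11 | by rewrite e_sym |].
  move=> w wC evw; apply/eqP; apply: contraT => wu.
  have wS' : w \notin S' := comp_of_notin wC.
  have wS : w \notin S by move: wS'; rewrite !inE wu => /norP[].
  have wv : w != v by apply: contraNneq wS' => ->; apply: setU11.
  have uw : u \in comp_of e S' w by rewrite (comp_of_eq wC) comp_of_id.
  have vw := comp_of_adj (comp_of_id vS) evw wS.
  have /setD1P[_ /comp_of_notin] := subsetP (comp_of_swap f vw wv) u uw.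
  by rewrite uS.
apply/andP; split.
  apply: psd_forcing_set_force f' _; apply: psd_forcing_setS fS.
  by apply/subsetP => x xS; rewrite !inE xS andbT; case: (x == u); rewrite ?orbT.
by rewrite cardsU1 in_setD1 (negbTE vS) andbF -cS (cardsD1 u S) uS.
Qed.

Lemma psd_force_targets_nonadj S u p q :
  psd_force e S u p -> psd_force e S u q -> p != q -> ~~ e p q.
Proof.
case/psd_forceP=> _ pS _ uniq /psd_forceP[_ qS euq _] pq; apply/negP => epq.
have qp := uniq q (comp_of_adj (comp_of_id pS) epq qS) euq.
by rewrite qp eqxx in pq.
Qed.

Lemma psd_force_functional_of_ZTE_ZTS :
  (forall S1 S2, ZTE_adj e S1 S2 = ZTS_adj e S1 S2) -> psd_force_functional.
Proof.
move=> ZTE_ZTS S u p q mS fp fq; apply/eqP/negPn/negP => pq.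
have /psd_forceP[_ pS _ _] := fp; have /psd_forceP[_ qS _ _] := fq.
have qp : q != p by rewrite eq_sym.
have D1 := setD_swap u pS pq; have D2 := setD_swap u qS qp.
have m1 := min_psd_forcing_set_swap mS fp; have m2 := min_psd_forcing_set_swap mS fq.
have: ZTE_adj e (p |: S :\ u) (q |: S :\ u).
  rewrite /ZTE_adj m1 m2 D1 D2; apply/existsP; exists p; apply/existsP; exists q.
  by rewrite !eqxx.
rewrite ZTE_ZTS /ZTS_adj m1 m2 D1 D2 => /existsP[v1 /existsP[v2]].
case/and3P=> /eqP/set1_inj <- /eqP/set1_inj <-.
by apply/negP; apply: psd_force_targets_nonadj fp fq pq.
Qed.

Lemma psd_forcing_set_pair B a b y :
  a \notin B -> b \notin B -> e a b -> comp_of e B a \subset [set a; b] ->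
  y \in B -> e y a -> ~~ e y b ->
  psd_forcing_set e (b |: (a |: B)) -> psd_forcing_set e B.
Proof.
move=> aB bB eab Cab yB eya neyb fB.
have ab : a != b by apply: contraNneq neyb => <-.
have bC : b \in comp_of e B a := comp_of_adj (comp_of_id aB) eab bB.
have fa : psd_force e B y a.
  apply/psd_forceP; split=> // w /(subsetP Cab) /set2P[-> //|->] eyb.
  by rewrite eyb in neyb.
have fb : psd_force e (a |: B) a b.
  apply/psd_forceP; split=> //; first exact: setU11.
    by rewrite !inE negb_or eq_sym ab.
  move=> w wC _; have wCa : w \in comp_of e B a.
    by rewrite -(comp_of_eq bC); apply: (subsetP (comp_ofS b (subsetU1 a B))).
  have /set2P[wa|//] := subsetP Cab w wCa.
  by move: (comp_of_notin wC); rewrite wa setU11.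
exact: psd_forcing_set_force fa (psd_forcing_set_force fb fB).
Qed.

Lemma isolated_closed_twin S w x :
  min_psd_forcing_set e S -> w \in isolated_white S -> e w x ->
  (forall y, e x y -> y != w -> y \in S) ->
  forall y, y != x -> y != w -> e x y = e w y.
Proof.
case/andP=> fS /eqP cS wI ewx nbx y yx yw.
have /isolated_whiteP[wS nbw] := wI; have xS := nbw x ewx.
set B := S :\ x.
have xB : x \notin B by rewrite !inE eqxx.
have wB : w \notin B by rewrite !inE negb_and wS orbT.
have SxB : S \subset x |: B by rewrite setD1K.
have Cwx : comp_of e B w \subset [set w; x].
  apply: comp_of_min; first exact: set21.
  move=> a b /set2P[->|->] eab; rewrite !inE negb_and negbK.
    by rewrite nbw // orbF => ->; rewrite orbT.
  by case: (eqVneq b w) => [-> //|bw]; rewrite nbx // orbF => ->; rewrite orbT.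
have Cxw : comp_of e B x \subset [set x; w].
  by rewrite (comp_of_eq (comp_of_adj (comp_of_id wB) ewx xB)) setUC.
(* {w, x} is a component of G - B, so a vertex of B adjacent to exactly one
   of w, x would make B a PSD forcing set smaller than S. *)
apply/eqP; apply: contraT => neq; suff : psd_forcing_set e B.
  by move/Zplus_le; rewrite -cS (cardsD1 x S) xS add1n ltnn.
move: neq; case Exy: (e x y); case Ewy: (e w y) => // _.
  have yB : y \in B by rewrite !inE yx nbx.
  have exw : e x w by rewrite e_sym.
  have eyx : e y x by rewrite e_sym.
  have neyw : ~~ e y w by rewrite e_sym Ewy.
  apply: (psd_forcing_set_pair xB wB exw Cxw yB eyx neyw).
  by apply: psd_forcing_setS fS; apply: subset_trans SxB (subsetU1 _ _).
have yB : y \in B by rewrite !inE yx nbw.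
have eyw : e y w by rewrite e_sym.
have neyx : ~~ e y x by rewrite e_sym Exy.
apply: (psd_forcing_set_pair wB xB ewx Cwx yB eyw neyx).
by apply: psd_forcing_setS fS; apply: subset_trans SxB (setUS _ (subsetU1 _ _)).
Qed.

Hypothesis e_irr : irreflexive e.
Hypothesis e_connected : connected_graph e.

Lemma complete_of_twins w :
  (forall x, e w x -> forall y, y != x -> y != w -> e x y = e w y) ->
  forall a b, a != b -> e a b.
Proof.
move=> tw.
have dom z : (z == w) || e w z.
  apply: (connect_stable (A := fun t => (t == w) || e w t)) (e_connected w z).
    2: by rewrite eqxx.
  move=> a b /orP[/eqP->|ewa] eab; first by rewrite eab orbT.
  case: (eqVneq b w) => [-> //|bw]; case: (eqVneq b a) => [ba|ba].
    by rewrite ba e_irr in eab.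
  by rewrite -(tw a ewa b ba bw) eab orbT.
move=> a b ab; case: (eqVneq a w) => [aw|aw].
  by have := dom b; rewrite -aw eq_sym (negbTE ab).
case: (eqVneq b w) => [->|bw]; first by have := dom a; rewrite (negbTE aw) e_sym.
have := dom a; rewrite (negbTE aw) /= => ewa.
have := dom b; rewrite (negbTE bw) /= => ewb.
by rewrite (tw a ewa b) // eq_sym.
Qed.

Lemma Zplus_lt_card a b : a != b -> Zplus e < #|T|.
Proof.
move=> ab; have [y eay] : exists y, e a y.
  case/connectP: (e_connected a b) => -[|y p] /= + lb; first by rewrite lb eqxx in ab.
  by case/andP=> eay _; exists y.
have aI : a \in isolated_white [set~ a].
  apply/isolated_whiteP; split=> [|z eaz]; first by rewrite !inE negbK.
  by rewrite !inE; apply: contraTneq eaz => ->; rewrite e_irr.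
have yB : y \in [set~ a] by rewrite !inE; apply: contraTneq eay => ->; rewrite e_irr.
have eya : e y a by rewrite e_sym.
have fB : psd_forcing_set e [set~ a].
  apply: psd_forcing_set_force (psd_force_isolated yB eya aI) _.
  by rewrite setUCr; apply: connect0.
apply: leq_ltn_trans (Zplus_le fB) _; rewrite cardsC1 ltn_predL.
by apply/card_gt0P; exists a.
Qed.

Section Functional.
Hypothesis e_functional : psd_force_functional.

Lemma isolated_white_swap S u v :
  min_psd_forcing_set e S -> psd_force e S u v -> v \notin isolated_white S ->
  isolated_white S \subset isolated_white (v |: S :\ u).
Proof.
move=> mS f vI; have /psd_forceP[uS _ _ _] := f.
apply/subsetP => w wI; have /isolated_whiteP[wS nbS] := wI.
have wv : w != v by apply: contraNneq vI => <-.
have nuw : ~~ e u w.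
  apply/negP => euw; have vw := e_functional mS f (psd_force_isolated uS euw wI).
  by rewrite vw eqxx in wv.
apply/isolated_whiteP; split; first by rewrite !inE negb_or wv negb_and wS orbT.
move=> y ewy; rewrite !inE nbS // andbT; apply/orP; right.
by apply: contraNneq nuw => <-; rewrite e_sym.
Qed.

Lemma complete_of_isolated S :
  min_psd_forcing_set e S -> S != setT ->
  (forall w, w \notin S -> w \in isolated_white S) -> forall a b, a != b -> e a b.
Proof.
move=> mS ST allI; have /subsetPn[w _ wS] : ~~ (setT \subset S) by rewrite subTset.
have wI := allI w wS; have /isolated_whiteP[_ nbw] := wI.
apply: (complete_of_twins (w := w)) => x ewx.
apply: (isolated_closed_twin mS wI ewx) => y exy yw.
apply/negPn/negP => yS; have xS := nbw x ewx; have exw : e x w by rewrite e_sym.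
have fw := psd_force_isolated xS exw wI.
have fy := psd_force_isolated xS exy (allI y yS).
by rewrite (e_functional mS fw fy) eqxx in yw.
Qed.

Lemma isolated_white_progress S c :
  min_psd_forcing_set e S -> c \notin S -> c \notin isolated_white S ->
  exists S1, [/\ min_psd_forcing_set e S1,
    isolated_white S \subset isolated_white S1 &
    #|isolated_white S| < #|isolated_white S1| \/
    exists2 y, (y \notin S1) && (y \notin isolated_white S1)
             & #|comp_of e S1 y| < #|comp_of e S c|].
Proof.
move=> mS cS cI; have /andP[fS _] := mS.
have [u [v [f vC]]] := psd_force_into_comp fS cS.
have CE : comp_of e S v = comp_of e S c := comp_of_eq vC.
have [y yC yv] : exists2 y, y \in comp_of e S c & y != v.
  move: cI; rewrite inE cS negb_forall => /existsP[c'].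
  rewrite negb_imply => /andP[ecc' c'S].
  case: (eqVneq c v) => [cv|cv]; last by exists c; rewrite ?comp_of_id.
  exists c'; first exact: comp_of_adj (comp_of_id cS) ecc' c'S.
  by rewrite -cv; apply: contraTneq ecc' => ->; rewrite e_irr.
have isoC z : z \in comp_of e S c -> z \in isolated_white S -> comp_of e S c = [set z].
  by move=> zC zI; rewrite -(comp_of_eq zC) comp_of_isolated.
have vI : v \notin isolated_white S.
  by apply: contraNN yv => /(isoC _ vC) CV; move: yC; rewrite CV in_set1.
have yI : y \notin isolated_white S.
  by apply: contraNN yv => /(isoC _ yC) CY; move: vC; rewrite CY in_set1 eq_sym.
have isub := isolated_white_swap mS f vI.
exists (v |: S :\ u); split; [exact: min_psd_forcing_set_swap | exact: isub |].
case: (boolP (y \in isolated_white (v |: S :\ u))) => yI1; [left | right].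
  by apply: proper_card; rewrite properE isub /=; apply/subsetPn; exists y.
have yS1 : y \notin v |: S :\ u.
  by rewrite !inE negb_or yv negb_and (comp_of_notin yC) orbT.
exists y; first by rewrite yS1 yI1.
have yCv : y \in comp_of e S v by rewrite CE.
apply: leq_ltn_trans (subset_leq_card (comp_of_swap f yCv yv)) _.
by rewrite -CE; apply/proper_card/properD1/comp_of_id/(comp_of_notin vC).
Qed.

Lemma exists_min_all_isolated :
  exists2 S, min_psd_forcing_set e S
           & forall w, w \notin S -> w \in isolated_white S.
Proof.
have [S0 mS0] := exists_min_psd_forcing_set.
case: (arg_maxnP (fun S => #|isolated_white S|) mS0) => S mS maxS.
exists S => // c cS; apply/negPn/negP => cI.
suff no_white n S' c' : min_psd_forcing_set e S' ->
    #|isolated_white S'| = #|isolated_white S| ->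
    c' \notin S' -> c' \notin isolated_white S' -> #|comp_of e S' c'| < n -> False.
  exact: (no_white _ S c mS erefl cS cI (ltnSn _)).
elim: n S' c' => [|n IH] S' c' mS' eqI c'S c'I; first by rewrite ltn0.
have [S1 [mS1 sub progress]] := isolated_white_progress mS' c'S c'I.
have le1 : #|isolated_white S1| <= #|isolated_white S| := maxS S1 mS1.
case: progress => [|[y /andP[yS1 yI1] ltC] ltn]; first by rewrite eqI ltnNge le1.
apply: (IH S1 y mS1 _ yS1 yI1 (leq_trans ltC ltn)).
by apply/eqP; rewrite eqn_leq le1 -eqI subset_leq_card.
Qed.

Lemma complete_of_functional a b : a != b -> e a b.
Proof.
move=> ab; have [S mS allI] := exists_min_all_isolated.
apply: (complete_of_isolated mS _ allI ab).
have /andP[_ /eqP cS] := mS.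
by apply: contraTneq (Zplus_lt_card ab) => ST; rewrite -cS ST cardsT ltnn.
Qed.
End Functional.
End PSDForcing.

Lemma graph_iso_complete_rel (T : finType) (e : rel T) :
  irreflexive e -> (forall a b, a != b -> e a b) -> graph_iso e (complete_rel #|T|).
Proof.
move=> e_irr e_cpl; exists enum_rank; split.
  exact: Bijective (@enum_rankK T) (@enum_valK T).
move=> x y; rewrite /complete_rel (inj_eq enum_rank_inj).
by case: (eqVneq x y) => [->|/e_cpl ->]; rewrite ?e_irr.
Qed.

Lemma graph_iso_complete_relE (T : finType) (e : rel T) n :
  graph_iso e (complete_rel n) -> forall x y, e x y = (x != y).
Proof. by case=> f [[g fK _] fe] x y; rewrite -fe /complete_rel (can_eq fK). Qed.

Lemma ZTE_adj_complete (T : finType) (e : rel T) (S1 S2 : {set T}) :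
  (forall x y, x != y -> e x y) -> ZTE_adj e S1 S2 = ZTS_adj e S1 S2.
Proof.
move=> e_cpl; congr [&& _, _ & _]; apply: eq_existsb => v1; apply: eq_existsb => v2.
rewrite andbA; case: andP => //= -[/eqP D1 /eqP D2].
have /setDP[_ v1S2] : v1 \in S1 :\: S2 by rewrite D1 set11.
have /setDP[v2S2 _] : v2 \in S2 :\: S1 by rewrite D2 set11.
by rewrite e_cpl //; apply: contraNneq v1S2 => ->.
Qed.

Theorem proposition4p12 (T : finType) (e : rel T) :
  simple_graph e -> connected_graph e ->
  ((forall S1 S2 : {set T}, ZTE_adj e S1 S2 = ZTS_adj e S1 S2) <->
   exists n : nat, graph_iso e (complete_rel n)).
Proof.
move=> [e_sym e_irr] e_conn; split=> [ZTE_ZTS | [n e_iso] S1 S2].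
  exists #|T|; apply: graph_iso_complete_rel => // a b.
  exact: complete_of_functional e_sym e_irr e_conn
    (psd_force_functional_of_ZTE_ZTS e_sym ZTE_ZTS) a b.
by apply: ZTE_adj_complete => x y; rewrite (graph_iso_complete_relE e_iso).
Qed.
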